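(* If two groups $\mathsf G^{(e_2,e_3,h_2,h_3)}_\beta$ and $\mathsf G^{(e_2',e_3',h_2',h_3')}_{\beta'}$ (as defined in the context) are isomorphic as algebraic permutation groups, then $(e_2',e_3',h_2',h_3')=(e_2,e_3,h_2,h_3)$.
   Context: Let $\mathsf k$ be an algebraically closed field. For admissible data, $\mathsf G^{(e_2,e_3,h_2,h_3)}_\beta=(G,\mathsf k^2,\overline\Omega)$ denotes the following group. On $\mathsf k^3$ define $(x_1,x_2,x_3)(y_1,y_2,y_3)=\big(x_1+y_1+\psi_1(x_3,y_2,y_3),\ x_2+y_2+\psi_2(x_3,y_3),\ x_3+y_3\big)$ with $\psi_1(x_3,y_2,y_3)=y_2^{h_2}x_3^{h_3}+\beta(x_3,y_3)$, $h_i=p^{l_i}$ if $\mathrm{char}\,\mathsf k=p>0$ and $h_i=1$ otherwise, and either (A) $\psi_2=0$ and $\beta\in\{0,\ \sum_{i=1}^{p-1}\frac1p\binom pi x_3^{ip^r}y_3^{(p-i)p^r},\ x_3^{p^r}y_3^{p^s}\}$ ($r<s$; nonzero options only in characteristic $p>0$), or (B) $\mathrm{char}\,\mathsf k=p>2$, $\psi_2=x_3^{p^m}y_3^{p^n}$ with $m<n$, $l_3-l_2\in\{m,n\}$, and $\beta=\frac12x_3^{2p^{l_3}}y_3^{p^{l_2+n}}$ if $l_3-l_2=m$, $\beta=x_3^{p^{l_3}+p^{l_2+m}}y_3^{p^{l_3}}+\frac12x_3^{p^{l_2+m}}y_3^{2p^{l_3}}$ if $l_3-l_2=n$. $a\in\mathsf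 k^*$ acts on $\mathsf k^3$ by $(u_1,u_2,u_3)\mapsto(a^{e_1}u_1,a^{e_2}u_2,a^{e_3}u_3)$ with $e_3$ a positive power of $p$ (or $1$ in characteristic $0$), $e_1=e_2h_2+e_3h_3$, and if $\beta\neq0$ also $e_1=e_3\deg\beta$, $e_2=e_3(\deg\beta-h_3)/h_2$. $G=\mathsf k^3\rtimes\mathsf k^*$ for this action; it acts on $\mathsf k^2$ by $(u_1,u_2,u_3,a)\cdot(x,y)=\big(u_1+a^{e_1}x+\psi_1(u_3,0,a^{e_3}y),\ u_3+a^{e_3}y\big)$, and the blocks $\overline\Omega$ are the horizontal lines $y=\text{const}$. An isomorphism of algebraic permutation groups is a pair $(\Phi_1,\Phi_2)$ with $\Phi_1$ an isomorphism of algebraic groups and $\Phi_2:\mathsf k^2\to\mathsf k^2$ a bijective morphism mapping blocks onto blocks with $\Phi_2(g(P))=\Phi_1(g)(\Phi_2(P))$. *)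

From HB Require Import structures.
From mathcomp Require Import all_boot all_order all_algebra.
Set Implicit Arguments. Unset Strict Implicit. Unset Printing Implicit Defensive.
Import GRing.Theory.
Local Open Scope ring_scope.

(* Choice of beta (and psi2):
   BZero        : case (A), beta = 0
   BSum r       : case (A), beta = sum_{i=1}^{p-1} (1/p) C(p,i) x^{i p^r} y^{(p-i) p^r}
   BMon r s     : case (A), beta = x^{p^r} y^{p^s}            (r < s)
   CaseBm m n   : case (B), psi2 = x^{p^m} y^{p^n}, l3 - l2 = m
   CaseBn m n   : case (B), psi2 = x^{p^m} y^{p^n}, l3 - l2 = n *)
Inductive bkind := BZero | BSum of nat | BMon of nat & nat
                 | CaseBm of nat & nat | CaseBn of nat & nat.

Record gdata := GData { d_l2 : nat; d_l3 : nat; d_beta : bkind;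
                        d_e2 : int; d_k3 : nat }.

Definition char_exp (K : fieldType) (q : nat) : Prop :=
  (q \in [pchar K]) \/ ([pchar K] =i pred0 /\ q = 1%N).

(* group elements (u1,u2,u3,a) of k^3 x k^* *)
Record G4 (K : Type) := mkG { c1 : K; c2 : K; c3 : K; ca : K }.

Section Defs.
Variables (K : fieldType) (q : nat).

Definition h2 (d : gdata) : nat := (q ^ d_l2 d)%N.
Definition h3 (d : gdata) : nat := (q ^ d_l3 d)%N.
Definition e3 (d : gdata) : int := (q ^ d_k3 d)%N%:Z.
Definition e1 (d : gdata) : int := d_e2 d * (h2 d)%:Z + e3 d * (h3 d)%:Z.

Definition beta (d : gdata) (x y : K) : K :=
  match d_beta d with
  | BZero => 0
  | BSum r => \sum_(1 <= i < q)
       (('C(q, i) %/ q)%N)%:R * x ^+ (i * q ^ r) * y ^+ ((q - i) * q ^ r)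
  | BMon r s => x ^+ (q ^ r) * y ^+ (q ^ s)
  | CaseBm m n => 2^-1 * x ^+ (2 * q ^ d_l3 d) * y ^+ (q ^ (d_l2 d + n))
  | CaseBn m n => x ^+ (q ^ d_l3 d + q ^ (d_l2 d + m)) * y ^+ (q ^ d_l3 d)
                  + 2^-1 * x ^+ (q ^ (d_l2 d + m)) * y ^+ (2 * q ^ d_l3 d)
  end.

Definition degbeta (d : gdata) : nat :=
  match d_beta d with
  | BZero => 0
  | BSum r => q ^ r.+1
  | BMon r s => q ^ r + q ^ s
  | CaseBm m n => 2 * q ^ d_l3 d + q ^ (d_l2 d + n)
  | CaseBn m n => 2 * q ^ d_l3 d + q ^ (d_l2 d + m)
  end.

Definition psi2 (d : gdata) (x3 y3 : K) : K :=
  match d_beta d with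
  | CaseBm m n | CaseBn m n => x3 ^+ (q ^ m) * y3 ^+ (q ^ n)
  | _ => 0
  end.

Definition psi1 (d : gdata) (x3 y2 y3 : K) : K :=
  y2 ^+ h2 d * x3 ^+ h3 d + beta d x3 y3.

(* admissibility of the data (q is assumed to be the characteristic exponent) *)
Definition admissible (d : gdata) : bool :=
  (match d_beta d with
      | BZero => true
      | BSum r => prime q
      | BMon r s => prime q && (r < s)%N
      | CaseBm m n => [&& prime q, (2 < q)%N, (m < n)%N & d_l3 d == (d_l2 d + m)%N]
      | CaseBn m n => [&& prime q, (2 < q)%N, (m < n)%N & d_l3 d == (d_l2 d + n)%N]
      end)
  && ((if d_beta d is BZero then false else true) ==>
        (d_e2 d * (h2 d)%:Z == e3 d * ((degbeta d)%:Z - (h3 d)%:Z))).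

Definition inG (g : G4 K) : bool := ca g != 0.

(* multiplication of G = k^3 x| k^* : (u,a)(v,b) = (u * (a.v), ab) *)
Definition gmul (d : gdata) (g h : G4 K) : G4 K :=
  let a := ca g in
  let v1 := a ^ e1 d * c1 h in
  let v2 := a ^ d_e2 d * c2 h in
  let v3 := a ^ e3 d * c3 h in
  mkG (c1 g + v1 + psi1 d (c3 g) v2 v3) (c2 g + v2 + psi2 d (c3 g) v3)
      (c3 g + v3) (a * ca h).

Definition gact (d : gdata) (g : G4 K) (P : K * K) : K * K :=
  (c1 g + ca g ^ e1 d * P.1 + psi1 d (c3 g) 0 (ca g ^ e3 d * P.2),
   c3 g + ca g ^ e3 d * P.2).

(* polynomials in several variables as iterated univariate polynomials *)
Definition eval2 (P : {poly {poly K}}) (x y : K) : K := (P.[y%:P]).[x].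
Definition eval4 (P : {poly {poly {poly {poly K}}}}) (x1 x2 x3 x4 : K) : K :=
  (((P.[x4%:P%:P%:P]).[x3%:P%:P]).[x2%:P]).[x1].

(* regular functions on the affine variety k^3 x k^* *)
Definition regG (f : G4 K -> K) : Prop :=
  exists (P : {poly {poly {poly {poly K}}}}) (n : nat),
    forall g, inG g -> f g = eval4 P (c1 g) (c2 g) (c3 g) (ca g) / ca g ^+ n.

Definition morphG (F : G4 K -> G4 K) : Prop :=
  [/\ forall g, inG g -> inG (F g),
      regG (fun g => c1 (F g)), regG (fun g => c2 (F g)),
      regG (fun g => c3 (F g)) & regG (fun g => ca (F g))].

Definition morphA2 (F : K * K -> K * K) : Prop :=
  (exists P, forall x y, (F (x, y)).1 = eval2 P x y) /\
  (exists P, forall x y, (F (x, y)).2 = eval2 P x y).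

Definition isom_alg_perm (d d' : gdata) : Prop :=
  exists (F Finv : G4 K -> G4 K) (Phi2 : K * K -> K * K),
  [/\
      morphG F, morphG Finv,
      (forall g, inG g -> Finv (F g) = g),
      (forall g, inG g -> F (Finv g) = g) &
      (forall g h, inG g -> inG h -> F (gmul d g h) = gmul d' (F g) (F h))]
  /\ [/\ (* Phi2 is a bijective morphism mapping blocks onto blocks *)
      bijective Phi2, morphA2 Phi2,
      (forall c, exists c', forall P,
          (exists2 Q, Q.2 = c & Phi2 Q = P) <-> P.2 = c') &
      (forall g P, inG g -> Phi2 (gact d g P) = gact d' (F g) (Phi2 P))].

End Defs.

(* An isomorphism (Phi1, Phi2) of algebraic permutation groups permutes the blocks,
   so the block index of Phi2 (x, y) is a polynomial p(y); since the inverse of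
   Phi1 is regular, p o r = y + p(0) for some polynomial r, so p is affine.
   Equivariance on the block index then gives a(Phi1 g) ^ e3' = a(g) ^ e3, and
   comparing degrees of the regular function a |-> a(Phi1 (0,0,0,a)) yields
   e3' | e3, hence e3' = e3 by symmetry, and Phi1 fixes the torus pointwise.
   Phi1 restricts to the line u2 as a nonconstant polynomial f with
   f(a^e2 u) = a^e2' f(u), so e2' = e2 deg f; the commutator of (0,0,w) and
   (0,u,0), which is (u^h2 w^h3, 0, 0), gives h3' = s h3 and h2' deg f = h2 s.
   Applying all this to the inverse forces s = deg f = 1. *)

From HB Require Import structures.
From mathcomp Require Import all_boot all_order all_algebra.
From mathcomp Require Import ring.
Set Implicit Arguments. Unset Strict Implicit. Unset Printing Implicit Defensive.
Import GRing.Theory.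
Local Open Scope ring_scope.

Section ClosedFieldPolynomials.
Variable K : closedFieldType.

Lemma poly_eq0_units (p : {poly K}) : (forall a, a != 0 -> p.[a] = 0) -> p = 0.
Proof.
move=> p0; suff /eqP : p * 'X = 0 by rewrite mulf_eq0 polyX_eq0 orbF => /eqP.
apply/eqP; apply/negPn/negP => /closed_nonrootP[a]; rewrite /root hornerM hornerX.
by have [->|/p0->] := eqVneq a 0; rewrite ?mulr0 ?mul0r eqxx.
Qed.

Lemma poly_inj_units (p r : {poly K}) : (forall a, a != 0 -> p.[a] = r.[a]) -> p = r.
Proof.
move=> pr; apply/eqP; rewrite -subr_eq0; apply/eqP/poly_eq0_units => a a0.
by rewrite hornerD hornerN pr ?subrr.
Qed.

Lemma exprn_units_eq1 (k : nat) : (forall a : K, a != 0 -> a ^+ k = 1) -> k = 0%N.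
Proof.
case: k => // k ak1; have : ('X^(k.+1) - 1 : {poly K}) = 0.
  by apply: poly_eq0_units => a a0; rewrite hornerD hornerN hornerXn hornerC ak1 ?subrr.
by move/(congr1 (fun p : {poly K} => size p)); rewrite size_XnsubC ?size_poly0.
Qed.

Lemma exprz_units_inj (m n : int) : (forall a : K, a != 0 -> a ^ m = a ^ n) -> m = n.
Proof.
move=> amn; apply/eqP; rewrite -subr_eq0; apply/eqP.
have a1 (a : K) : a != 0 -> a ^ (m - n) = 1.
  by move=> a0; rewrite expfzDr // amn // -expfzDr // subrr expr0z.
case: (m - n) a1 => k ak1; first by rewrite (exprn_units_eq1 ak1).
suff : k.+1 = 0%N by [].
apply: exprn_units_eq1 => a /ak1; rewrite NegzE -invr_expz => /eqP.
by rewrite invr_eq1 => /eqP.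
Qed.

End ClosedFieldPolynomials.

Lemma horner_swapC (R : comNzRingType) (Q : {poly {poly R}}) (x t : R) :
  (Q.[t%:P]).[x] = (map_poly (horner_eval x) Q).[t].
Proof.
have {2}-> : t = horner_eval x t%:P by rewrite horner_evalE hornerC.
by rewrite horner_map.
Qed.

Lemma comp_poly_eq_XaddC_size (R : idomainType) (p r : {poly R}) (c : R) :
  p \Po r = 'X + c%:P -> size p = 2.
Proof.
move/(congr1 (fun s : {poly R} => (size s).-1)).
rewrite size_comp_poly size_XaddC => /eqP; rewrite muln_eq1 => /andP[/eqP].
by case: (size p) => [|[|[]]].
Qed.

Lemma char_exp_gt0 (K : fieldType) q : char_exp K q -> (0 < q)%N.
Proof. by case=> [/pcharf_prime/prime_gt0 | [_ ->]]. Qed.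

Lemma char_exp_expr_inj (K : fieldType) q k (x y : K) :
  char_exp K q -> x ^+ (q ^ k) = y ^+ (q ^ k) -> x = y.
Proof.
case=> [qK | [_ ->]]; last by rewrite exp1n !expr1.
elim: k x y => [|k IHk] x y; first by rewrite !expr1.
rewrite expnSr !exprM -!(pFrobenius_autE qK) => /eqP.
rewrite -subr_eq0 -pFrobenius_autB_comm; last exact: mulrC.
by rewrite pFrobenius_autE expf_eq0 subr_eq0 => /andP[_ /eqP/IHk].
Qed.

Lemma inG1 (K : fieldType) (x1 x2 x3 : K) : inG (mkG x1 x2 x3 1).
Proof. exact: oner_neq0. Qed.

Lemma inG_gmul (K : fieldType) q d (g h : G4 K) : inG g -> inG h -> inG (gmul q d g h).
Proof. exact: mulf_neq0. Qed.

Lemma G4_eta (K : Type) (g : G4 K) : g = mkG (c1 g) (c2 g) (c3 g) (ca g).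
Proof. by case: g. Qed.

Section RegularFunctionsOnLines.
Variables (K : fieldType) (f : G4 K -> K).
Hypothesis f_reg : regG f.

Lemma regG_line1 x2 x3 : exists p : {poly K}, forall t, f (mkG t x2 x3 1) = p.[t].
Proof.
have [P [n fP]] := f_reg; exists (P.[1%:P%:P%:P].[x3%:P%:P].[x2%:P]) => t.
by rewrite fP ?inG1 //= expr1n divr1.
Qed.

Lemma regG_line2 x1 x3 : exists p : {poly K}, forall t, f (mkG x1 t x3 1) = p.[t].
Proof.
have [P [n fP]] := f_reg.
exists (map_poly (horner_eval x1) (P.[1%:P%:P%:P].[x3%:P%:P])) => t.
by rewrite fP ?inG1 //= expr1n divr1 /eval4 horner_swapC.
Qed.

Lemma regG_line3 x1 x2 : exists p : {poly K}, forall t, f (mkG x1 x2 t 1) = p.[t].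
Proof.
have [P [n fP]] := f_reg.
exists (map_poly (horner_eval x1) (map_poly (horner_eval x2%:P) P.[1%:P%:P%:P])) => t.
by rewrite fP ?inG1 //= expr1n divr1 /eval4 [X in X.[x1]]horner_swapC horner_swapC.
Qed.

Lemma regG_torus x1 x2 x3 : exists (p : {poly K}) n,
  forall t, t != 0 -> f (mkG x1 x2 x3 t) = p.[t] / t ^+ n.
Proof.
have [P [n fP]] := f_reg; exists (map_poly (horner_eval x1)
  (map_poly (horner_eval x2%:P) (map_poly (horner_eval x3%:P%:P) P))), n => t t0.
by rewrite fP //= /eval4 [X in X.[x2%:P]]horner_swapC [X in X.[x1]]horner_swapC horner_swapC.
Qed.

End RegularFunctionsOnLines.

Section GroupLaw.
Variables (K : fieldType) (q : nat) (d : gdata).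
Hypothesis q_gt0 : (0 < q)%N.

Let expr0_pos n : (0 < n)%N -> (0 : K) ^+ n = 0.
Proof. by case: n => // n _; rewrite expr0n. Qed.

Let qX_gt0 k : (0 < q ^ k)%N.
Proof. by rewrite expn_gt0 q_gt0. Qed.

Lemma beta0l (y : K) : beta q d 0 y = 0.
Proof.
rewrite /beta; case: (d_beta d) => [|r|r s|m n|m n] //.
- rewrite big1_seq // => i /andP[_]; rewrite mem_index_iota => /andP[i_gt0 _].
  by rewrite expr0_pos ?mulr0 ?mul0r // muln_gt0 i_gt0 qX_gt0.
- by rewrite expr0_pos ?mul0r.
- by rewrite expr0_pos ?mulr0 ?mul0r // muln_gt0 qX_gt0.
- by rewrite !expr0_pos ?mulr0 ?mul0r ?addr0 // ?addn_gt0 ?muln_gt0 qX_gt0.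
Qed.

Lemma beta0r (x : K) : beta q d x 0 = 0.
Proof.
rewrite /beta; case: (d_beta d) => [|r|r s|m n|m n] //.
- rewrite big1_seq // => i /andP[_]; rewrite mem_index_iota => /andP[_ i_lt].
  by rewrite expr0_pos ?mulr0 // muln_gt0 subn_gt0 i_lt qX_gt0.
- by rewrite expr0_pos ?mulr0.
- by rewrite expr0_pos ?mulr0.
- by rewrite !expr0_pos ?mulr0 ?addr0 // muln_gt0 qX_gt0.
Qed.

Lemma psi2_0l (y : K) : psi2 q d 0 y = 0.
Proof. by rewrite /psi2; case: (d_beta d) => // *; rewrite expr0_pos ?mul0r ?qX_gt0. Qed.

Lemma psi2_0r (x : K) : psi2 q d x 0 = 0.
Proof. by rewrite /psi2; case: (d_beta d) => // *; rewrite expr0_pos ?mulr0 ?qX_gt0. Qed.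

Lemma psi1_0l (y2 y3 : K) : psi1 q d 0 y2 y3 = 0.
Proof. by rewrite /psi1 beta0l expr0_pos ?mulr0 ?add0r ?qX_gt0. Qed.

Lemma psi1_0r (x y2 : K) : psi1 q d x y2 0 = y2 ^+ h2 q d * x ^+ h3 q d.
Proof. by rewrite /psi1 beta0r addr0. Qed.

Lemma gmul_line2 (u v : K) :
  gmul q d (mkG 0 u 0 1) (mkG 0 v 0 1) = mkG 0 (u + v) 0 1.
Proof. by rewrite /gmul /= !exp1rz !mul1r psi1_0l psi2_0l ?mulr1 !add0r !addr0. Qed.

Lemma gmul_commutator (u w : K) :
  gmul q d (mkG 0 0 w 1) (mkG 0 u 0 1) =
  gmul q d (mkG (u ^+ h2 q d * w ^+ h3 q d) 0 0 1)
           (gmul q d (mkG 0 u 0 1) (mkG 0 0 w 1)).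
Proof.
rewrite /gmul /= !exp1rz !mul1r !psi1_0l psi1_0r psi2_0r !psi2_0l.
by rewrite !addr0 !add0r.
Qed.

Lemma gmul_torus_conj (a u : K) :
  gmul q d (mkG 0 0 0 a) (mkG 0 u 0 1) =
  gmul q d (mkG 0 (a ^ d_e2 d * u) 0 1) (mkG 0 0 0 a).
Proof.
by rewrite /gmul /= !exp1rz !mul1r !mulr0 !psi1_0l psi2_0l ?mulr1 !addr0 !add0r.
Qed.

Lemma gact_unipotent (g : G4 K) x y : ca g = 1 ->
  gact q d g (x, y) = (c1 g + x + psi1 q d (c3 g) 0 y, c3 g + y).
Proof. by move=> g1; rewrite /gact g1 !exp1rz !mul1r. Qed.

End GroupLaw.

(* What an isomorphism of algebraic permutation groups provides once Phi is known
   to act on the block index by an affine map; its inverse provides one as well. *)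
Record equivariant_pair (K : fieldType) q d d' (F : G4 K -> G4 K)
    (Phi : K * K -> K * K) (lam mu : K) : Prop := {
  ep_morph : morphG F;
  ep_hom : forall g h, inG g -> inG h -> F (gmul q d g h) = gmul q d' (F g) (F h);
  ep_inj : forall g h, inG g -> inG h -> F g = F h -> g = h;
  ep_surj : forall P', exists P, Phi P = P';
  ep_lam : lam != 0;
  ep_block : forall x y, (Phi (x, y)).2 = lam * y + mu;
  ep_equiv : forall g P, inG g -> Phi (gact q d g P) = gact q d' (F g) (Phi P)
}.

Section EquivariantPair.
Variables (K : closedFieldType) (q : nat) (d d' : gdata).
Variables (F : G4 K -> G4 K) (Phi : K * K -> K * K) (lam mu : K).
Hypotheses (qK : char_exp K q) (FPhi : equivariant_pair q d d' F Phi lam mu).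

Let q_gt0 := char_exp_gt0 qK.
Let Fhom := ep_hom FPhi.
Let Finj := ep_inj FPhi.
Let lam0 := ep_lam FPhi.

Lemma ep_block_equiv g y : inG g ->
  lam * (c3 g + ca g ^ e3 q d * y) + mu = c3 (F g) + ca (F g) ^ e3 q d' * (lam * y + mu).
Proof.
move=> gG; have := congr1 snd (ep_equiv FPhi (0, y) gG).
by rewrite /= !(ep_block FPhi).
Qed.

Lemma ep_c3 g : inG g -> c3 (F g) + ca (F g) ^ e3 q d' * mu = lam * c3 g + mu.
Proof. by move=> gG; have := ep_block_equiv 0 gG; rewrite !mulr0 !addr0 add0r => ->. Qed.

Lemma ep_e3 g : inG g -> ca (F g) ^ e3 q d' = ca g ^ e3 q d.
Proof.
move=> gG; apply: (mulIf lam0).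
transitivity ((c3 (F g) + ca (F g) ^ e3 q d' * (lam * 1 + mu))
              - (c3 (F g) + ca (F g) ^ e3 q d' * mu)); first by ring.
by rewrite -ep_block_equiv // ep_c3 //; ring.
Qed.

Lemma ep_unipotent g : inG g -> ca g = 1 -> ca (F g) = 1 /\ c3 (F g) = lam * c3 g.
Proof.
move=> gG g1; have Fg1 : ca (F g) = 1.
  apply: (char_exp_expr_inj (k := d_k3 d') qK); rewrite expr1n.
  by have := ep_e3 gG; rewrite g1 exp1rz /e3 -exprnP.
by split=> //; have := ep_c3 gG; rewrite Fg1 exp1rz mul1r => /addIr.
Qed.

Lemma ep_line2_stable u : F (mkG 0 u 0 1) = mkG 0 (c2 (F (mkG 0 u 0 1))) 0 1.
Proof.
have [Fg1 Fg3] := ep_unipotent (inG1 0 u 0) erefl; rewrite /= mulr0 in Fg3.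
(* Some P is mapped to the origin; g fixes P, so F g fixes the origin. *)
have [[x y] Pxy] := ep_surj FPhi (0, 0).
have := ep_equiv FPhi (x, y) (inG1 0 u 0).
rewrite gact_unipotent //= psi1_0l // addr0 !add0r Pxy gact_unipotent // Fg3.
rewrite psi1_0l // !addr0 => -[Fg1'].
by rewrite [LHS]G4_eta -Fg1' Fg3 Fg1.
Qed.

Lemma ep_line2_additive u v :
  c2 (F (mkG 0 (u + v) 0 1)) = c2 (F (mkG 0 u 0 1)) + c2 (F (mkG 0 v 0 1)).
Proof.
have := congr1 (@c2 K \o F) (gmul_line2 d q_gt0 u v).
by rewrite /= Fhom ?inG1 // [F (mkG 0 u _ _)]ep_line2_stable [F (mkG 0 v _ _)]ep_line2_stable gmul_line2.
Qed.

Lemma ep_commutator u w : c1 (F (mkG (u ^+ h2 q d * w ^+ h3 q d) 0 0 1)) =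
  c2 (F (mkG 0 u 0 1)) ^+ h2 q d' * (lam * w) ^+ h3 q d'.
Proof.
have := congr1 F (gmul_commutator d q_gt0 u w).
rewrite !Fhom ?inG1 ?inG_gmul ?inG1 // ep_line2_stable.
have [Fw1 Fw3] := ep_unipotent (inG1 0 0 w) erefl.
have [Fz1 Fz3] := ep_unipotent (inG1 (u ^+ h2 q d * w ^+ h3 q d) 0 0) erefl.
rewrite /= mulr0 in Fz3; rewrite /= in Fw3.
rewrite [F (mkG 0 0 w 1)]G4_eta [F (mkG _ 0 0 1)]G4_eta Fw1 Fw3 Fz1 Fz3.
rewrite /gmul /= !exp1rz !mul1r ?mulr0 ?psi1_0l // ?psi1_0r // ?addr0 ?add0r.
by move/(congr1 (@c1 K)) => /= /esym; rewrite addrC => /addrI.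
Qed.

Lemma ep_e3_dvd : (q ^ d_k3 d' %| q ^ d_k3 d)%N.
Proof.
have [_ _ _ _ /regG_torus/(_ 0 0 0)[r [n Fa]]] := ep_morph FPhi.
set N := (q ^ d_k3 d)%N; set N' := (q ^ d_k3 d')%N.
have rN' : r ^+ N' = 'X^(N + n * N').
  apply: poly_inj_units => a a0; have := ep_e3 (a0 : inG (mkG 0 0 0 a)).
  rewrite Fa // /e3 -!exprnP /= expr_div_n => /(canRL (mulfVK _)).
  by rewrite horner_exp hornerXn exprD exprM => ->; rewrite ?expf_neq0.
have := congr1 (fun p : {poly K} => (size p).-1) rN'.
rewrite size_exp size_polyXn /= => sizeE.
by rewrite -(dvdn_addl _ (dvdn_mull n (dvdnn N'))) -sizeE dvdn_mull.
Qed.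

Lemma ep_line2_poly : exists fp : {poly K},
  (forall u, c2 (F (mkG 0 u 0 1)) = fp.[u]) /\ fp.[0] = 0 /\ fp.[1] != 0.
Proof.
have [_ _ /regG_line2/(_ 0 0)[fp fpE] _ _] := ep_morph FPhi.
exists fp; split=> //; rewrite -!fpE.
have f00 : c2 (F (mkG 0 0 0 1)) = 0.
  by apply/esym/(@addrI _ (c2 (F (mkG 0 0 0 1)))); rewrite -ep_line2_additive !addr0.
split=> //; apply/eqP => f10.
have : mkG 0 1 0 1 = mkG 0 0 0 (1 : K).
  by apply: Finj; rewrite ?inG1 // ep_line2_stable [RHS]ep_line2_stable f10 f00.
by move/(congr1 (@c2 K))/eqP; rewrite oner_eq0.
Qed.

Hypothesis e3_eq : e3 q d' = e3 q d.

Lemma ep_torus_id a : a != 0 -> ca (F (mkG 0 0 0 a)) = a.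
Proof.
move=> a0; apply: (char_exp_expr_inj (k := d_k3 d) qK).
by have := ep_e3 (a0 : inG (mkG 0 0 0 a)); rewrite e3_eq /e3 -!exprnP.
Qed.

Lemma ep_torus_conj a u : a != 0 ->
  c2 (F (mkG 0 (a ^ d_e2 d * u) 0 1)) = a ^ d_e2 d' * c2 (F (mkG 0 u 0 1)).
Proof.
move=> a0; have := congr1 F (gmul_torus_conj d q_gt0 a u).
rewrite !Fhom ?inG1 // (ep_line2_stable u) (ep_line2_stable (a ^ d_e2 d * u)).
rewrite [F (mkG 0 0 0 a)]G4_eta ep_torus_id //.
rewrite /gmul /= !exp1rz !mul1r !mulr0 psi2_0r // psi2_0l // !addr0.
by move/(congr1 (@c2 K)) => /= /esym; rewrite addrC => /addrI.
Qed.

Section LineTwoPolynomial.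
Variable fp : {poly K}.
Hypotheses (fpE : forall u, c2 (F (mkG 0 u 0 1)) = fp.[u])
           (fp0 : fp.[0] = 0) (fp1 : fp.[1] != 0).

Lemma ep_line2_size : (1 < size fp)%N.
Proof.
rewrite ltnNge; apply/negP => /size1_polyC fpC.
by move: fp1; rewrite fpC hornerC -[fp`_0](hornerC _ 0) -fpC fp0 eqxx.
Qed.

Lemma ep_h2_h3 : exists s : nat,
  h3 q d' = (s * h3 q d)%N /\ (h2 q d' * (size fp).-1 = h2 q d * s)%N.
Proof.
have [_ /regG_line1/(_ 0 0)[gp gpE] _ _ _] := ep_morph FPhi.
exists (size gp).-1; split.
  have fl0 : fp.[1] ^+ h2 q d' * lam ^+ h3 q d' != 0 by rewrite mulf_neq0 ?expf_neq0.
  have gpX : gp \Po 'X^(h3 q d) = (fp.[1] ^+ h2 q d' * lam ^+ h3 q d') *: 'X^(h3 q d').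
    apply: poly_inj_units => w _; rewrite horner_comp hornerZ !hornerXn -gpE.
    by have := ep_commutator 1 w; rewrite expr1n mul1r => ->; rewrite fpE exprMn mulrA.
  have := congr1 (fun p : {poly K} => (size p).-1) gpX.
  by rewrite size_comp_poly size_polyXn size_scale // size_polyXn.
have gpX : gp \Po 'X^(h2 q d) = lam ^+ h3 q d' *: fp ^+ h2 q d'.
  apply: poly_inj_units => u _; rewrite horner_comp hornerZ hornerXn horner_exp -gpE.
  by have := ep_commutator u 1; rewrite !expr1n !mulr1 => ->; rewrite fpE mulrC.
have := congr1 (fun p : {poly K} => (size p).-1) gpX.
by rewrite size_comp_poly size_polyXn size_scale ?expf_neq0 // size_exp /= => E; rewrite [LHS]mulnC -E mulnC.
Qed.

Lemma ep_e2 : d_e2 d' = d_e2 d * (size fp).-1%:Z.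
Proof.
apply/esym/(@exprz_units_inj K) => a a0.
have ae0 : a ^ d_e2 d != 0 by rewrite expfz_neq0.
have fpZ : fp \Po (a ^ d_e2 d *: 'X) = a ^ d_e2 d' *: fp.
  apply: poly_inj_units => u _; rewrite horner_comp !hornerZ hornerX -!fpE.
  exact: ep_torus_conj.
have := congr1 lead_coef fpZ.
rewrite lead_coef_comp ?size_scale ?size_polyX // !lead_coefZ lead_coefX mulr1 mulrC.
move/mulIf; rewrite lead_coef_eq0 -size_poly_gt0 (ltn_trans _ ep_line2_size) // => /(_ isT).
by rewrite -exprz_exp.
Qed.

End LineTwoPolynomial.

End EquivariantPair.

Lemma blocks_index_poly (K : fieldType) (Phi : K * K -> K * K) :
  morphA2 Phi ->
  (forall c, exists c', forall P, (exists2 Q, Q.2 = c & Phi Q = P) <-> P.2 = c') ->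
  exists p : {poly K}, forall x y, (Phi (x, y)).2 = p.[y].
Proof.
move=> [_ [P PhiP]] blocks; exists (map_poly (horner_eval 0) P) => x y.
have [c' blockE] := blocks y.
have c'E z : (Phi (z, y)).2 = c' by apply/blockE; exists (z, y).
by rewrite c'E -(c'E 0) PhiP /eval2 horner_swapC.
Qed.

Section Inverse.
Variables (K : fieldType) (q : nat) (d d' : gdata).
Variables (F Finv : G4 K -> G4 K) (Phi Phii : K * K -> K * K) (lam mu : K).
Hypotheses (FPhi : equivariant_pair q d d' F Phi lam mu) (Finv_morph : morphG Finv).
Hypotheses (FK : forall g, inG g -> Finv (F g) = g) (FinvK : forall g, inG g -> F (Finv g) = g).
Hypotheses (PhiK : cancel Phi Phii) (PhiiK : cancel Phii Phi).

Lemma equivariant_pair_inv :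
  equivariant_pair q d' d Finv Phii lam^-1 (- (lam^-1 * mu)).
Proof.
have [_ Fhom _ _ lam0 Phi2 Phi_equiv] := FPhi.
have [FiG _ _ _ _] := Finv_morph.
split=> //.
- move=> g h gG hG; rewrite -{1}(FinvK gG) -{1}(FinvK hG) -Fhom ?FiG //.
  by rewrite FK ?inG_gmul ?FiG.
- by move=> g h gG hG /(congr1 F); rewrite !FinvK.
- by move=> P; exists (Phi P).
- by rewrite invr_eq0.
- move=> x y; case Exy : (Phii (x, y)) => [x' y'] /=.
  by have := Phi2 x' y'; rewrite -Exy PhiiK /= => ->; rewrite mulrDr mulKf // addrK.
- move=> g P gG; apply: (can_inj PhiK).
  by rewrite PhiiK Phi_equiv ?FiG // FinvK // PhiiK.
Qed.

End Inverse.

Lemma isom_alg_perm_equivariant (K : closedFieldType) q d d' :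
  isom_alg_perm K q d d' -> exists F Finv Phi Phii (lam mu : K),
    equivariant_pair q d d' F Phi lam mu /\
    equivariant_pair q d' d Finv Phii lam^-1 (- (lam^-1 * mu)).
Proof.
move=> [F [Finv [Phi [[mF mFi FK FinvK Fhom] [[Phii PhiK PhiiK] mPhi blocks equiv]]]]].
have [p pE] := blocks_index_poly mPhi blocks.
have [FiG _ _ /regG_line3/(_ 0 0)[r rE] _] := mFi.
have /comp_poly_eq_XaddC_size sp : p \Po r = 'X + p.[0]%:P.
  apply: poly_inj_units => w _; rewrite horner_comp hornerD hornerX hornerC -rE.
  have := congr1 snd (equiv _ (0, 0) (FiG _ (inG1 0 0 w))).
  by rewrite FinvK ?inG1 //= !pE exp1rz mul1r /gact /= mulr0 addr0.
have lam0 : p`_1 != 0.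
  by have := lead_coef_eq0 p; rewrite lead_coefE sp -size_poly_eq0 sp => ->.
have Phi2 x y : (Phi (x, y)).2 = p`_1 * y + p`_0.
  by rewrite pE horner_coef sp !big_ord_recr big_ord0 /= add0r expr0 expr1 mulr1 addrC.
have FPhi : equivariant_pair q d d' F Phi p`_1 p`_0.
  split=> // [g h gG hG /(congr1 Finv)|P]; first by rewrite !FK.
  by exists (Phii P).
exists F, Finv, Phi, Phii, p`_1, p`_0; split=> //.
exact: (equivariant_pair_inv FPhi mFi FK FinvK PhiK PhiiK).
Qed.

Theorem mainTheorem17 (K : closedFieldType) (q : nat) (d d' : gdata) :
  char_exp K q ->
  admissible q d -> admissible q d' ->
  isom_alg_perm K q d d' ->
  (d_e2 d', e3 q d', h2 q d', h3 q d') = (d_e2 d, e3 q d, h2 q d, h3 q d).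
Proof.
move=> qK _ _ /isom_alg_perm_equivariant[F [Finv [Phi [Phii [lam [mu [FPhi FPhii]]]]]]].
have e3E : e3 q d' = e3 q d.
  rewrite /e3; congr Posz; apply/eqP.
  by rewrite eqn_dvd (ep_e3_dvd FPhi) (ep_e3_dvd FPhii).
have [fp [fpE [fp0 fp1]]] := ep_line2_poly qK FPhi.
have [fp' [fpE' [_ fp1']]] := ep_line2_poly qK FPhii.
have [s [h3E h2E]] := ep_h2_h3 qK FPhi fpE fp1.
have [s' [h3E' h2E']] := ep_h2_h3 qK FPhii fpE' fp1'.
set df' := (size fp').-1 in h2E'.
have e2E := ep_e2 qK FPhi e3E fpE fp0 fp1.
have h3_gt0 : (0 < h3 q d)%N by rewrite expn_gt0 (char_exp_gt0 qK).
have h2_gt0 : (0 < h2 q d)%N by rewrite expn_gt0 (char_exp_gt0 qK).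
have /eqP : (s' * s = 1)%N.
  by apply/eqP; rewrite -(eqn_pmul2r h3_gt0) mul1n -mulnA -h3E -h3E'.
rewrite muln_eq1 => /andP[/eqP s'1 /eqP s1].
have /eqP : (df' * (size fp).-1 = 1)%N.
  by apply/eqP; rewrite -(eqn_pmul2l h2_gt0) mulnA h2E' s'1 muln1 h2E s1.
rewrite muln_eq1 => /andP[_ /eqP df1].
by rewrite e2E df1 mulr1 e3E h3E -[h2 q d']muln1 -df1 h2E s1 mul1n muln1.
Qed.
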